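(* Let $\lambda=(\lambda_0,\lambda_1,\dots)\in\mathbf{W}(\mathcal{O}_K)$ and let $(\phi_0,\phi_1,\dots)\in\mathcal{O}_K^{\mathbb{N}}$ be its phantom vector. Then $\phi_j\to0$ in $\mathcal{O}_K$ if and only if $|\lambda_j|<1$ for all $j\ge0$.
   Context: $K$ is a field of characteristic $0$, complete for a non-archimedean absolute value $|\cdot|$, residue field of characteristic $p>0$; $\mathcal{O}_K=\{|x|\le1\}$. $\mathbf{W}(\mathcal{O}_K)$ is the ring of $p$-typical Witt vectors (of infinite length) with entries in $\mathcal{O}_K$; the phantom vector of $\lambda$ is given by $\phi_m=\lambda_0^{p^m}+p\lambda_1^{p^{m-1}}+\cdots+p^m\lambda_m$. *)

From HB Require Import structures.
From mathcomp Require Import all_boot all_order all_algebra.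
From mathcomp Require Import reals.
Set Implicit Arguments. Unset Strict Implicit. Unset Printing Implicit Defensive.
Import Order.TTheory GRing.Theory Num.Theory.
Local Open Scope ring_scope.

Record nonarch_abs (K : fieldType) (R : realType) (abs : K -> R) : Prop := {
  abs_ge0 : forall x, 0 <= abs x;
  abs_eq0 : forall x, (abs x == 0) = (x == 0);
  absM : forall x y, abs (x * y) = abs x * abs y;
  abs_ultra : forall x y, abs (x + y) <= Num.max (abs x) (abs y)
}.

Definition abs_cvg (K : fieldType) (R : realType) (abs : K -> R)
  (u : nat -> K) (l : K) : Prop :=
  forall e : R, 0 < e -> exists N : nat, forall n, (N <= n)%N -> abs (u n - l) < e.

Definition abs_cauchy (K : fieldType) (R : realType) (abs : K -> R)
  (u : nat -> K) : Prop :=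
  forall e : R, 0 < e -> exists N : nat,
    forall m n, (N <= m)%N -> (N <= n)%N -> abs (u m - u n) < e.

Definition abs_complete (K : fieldType) (R : realType) (abs : K -> R) : Prop :=
  forall u : nat -> K, abs_cauchy abs u -> exists l, abs_cvg abs u l.

(* The valuation ring O_K and elements of W(O_K) (p-typical Witt vectors of
   infinite length, given by their components). *)
Definition in_OK (K : fieldType) (R : realType) (abs : K -> R) (x : K) : Prop :=
  abs x <= 1.

Definition phantom_vector (K : fieldType) (p : nat) (lam : nat -> K) (m : nat) : K :=
  \sum_(i < m.+1) (p%:R ^+ i) * (lam i) ^+ (p ^ (m - i)).
Arguments phantom_vector : clear implicits.

From HB Require Import structures.
From mathcomp Require Import all_boot all_order all_algebra.
From mathcomp Require Import reals.
From mathcomp Require Import lra.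

Set Implicit Arguments.
Unset Strict Implicit.
Unset Printing Implicit Defensive.
Import Order.TTheory GRing.Theory Num.Theory.
Local Open Scope ring_scope.

(* If every |lam_i| < 1, the
   terms with i >= k are bounded by |p|^k, while each of the finitely many
   terms with i < k tends to 0 as m grows (its exponent p^(m-i) does), so the
   ultrametric inequality gives phi_m -> 0. Conversely, if j is the first index
   with |lam_j| = 1, then for large m the j-th term has absolute value |p|^j,
   strictly larger than that of the earlier terms (which tend to 0) and of the
   later ones (at most |p|^(j+1)); hence |phi_m| = |p|^j for all large m. *)

Lemma bernoulli_ineq (R : realDomainType) (d : R) n :
  0 <= d -> 1 + n%:R * d <= (1 + d) ^+ n.
Proof.
move=> d_ge0; elim: n => [|n IHn]; first by rewrite mul0r addr0 expr0.
rewrite exprSr -natr1.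
have nd_ge0 : 0 <= n%:R * d by rewrite mulr_ge0.
nra.
Qed.

Lemma expr_lt_eventually (R : archiRealFieldType) (c e : R) :
  0 <= c -> c < 1 -> 0 < e -> exists N, forall n, (N <= n)%N -> c ^+ n < e.
Proof.
move=> c_ge0 c_lt1 e_gt0.
have [->|c_neq0] := eqVneq c 0.
  by exists 1%N => -[|n] // _; rewrite expr0n.
have c_gt0 : 0 < c by rewrite lt_def c_neq0.
pose d := c^-1 - 1.
have d_gt0 : 0 < d by rewrite subr_gt0 invf_gt1.
pose N := Num.bound (e^-1 / d).
exists N => n le_Nn; apply: le_lt_trans (ler_wiXn2l c_ge0 (ltW c_lt1) le_Nn) _.
have Nd_gt : e^-1 < N%:R * d.
  by rewrite -ltr_pdivrMr // archi_boundP // divr_ge0 // ?invr_ge0 ltW.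
have cd1 : c ^+ N * (1 + d) ^+ N = 1.
  by rewrite -exprMn /d addrC subrK mulfV ?expr1n.
(* c = 1/(1+d), so Bernoulli's inequality bounds c^N by 1/(1 + N d) < e. *)
have cN_le : c ^+ N * (1 + N%:R * d) <= 1.
  by rewrite -[leRHS]cd1 ler_wpM2l ?exprn_ge0 ?bernoulli_ineq ?ltW.
have eNd_gt1 : 1 < e * (N%:R * d).
  by rewrite -[ltLHS](mulfV (lt0r_neq0 e_gt0)) ltr_pM2l.
have cN_ge0 : 0 <= c ^+ N by rewrite exprn_ge0.
nra.
Qed.

Section NonarchAbs.
Variables (K : fieldType) (R : realType) (abs : K -> R).
Hypothesis Habs : nonarch_abs abs.

Lemma abs0 : abs 0 = 0.
Proof. by apply/eqP; rewrite (abs_eq0 Habs). Qed.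

Lemma abs1 : abs 1 = 1.
Proof.
have abs1_neq0 : abs 1 != 0 by rewrite (abs_eq0 Habs) oner_neq0.
apply: (mulfI abs1_neq0); by rewrite -(absM Habs) !mulr1.
Qed.

Lemma absN x : abs (- x) = abs x.
Proof.
have absN1_sqr : abs (-1) ^+ 2 = 1 ^+ 2 by rewrite expr1n expr2 -(absM Habs) mulrNN mulr1 abs1.
have absN1 : abs (-1) = 1.
  by move/eqP: absN1_sqr; rewrite eqrXn2 ?(abs_ge0 Habs) // => /eqP.
by rewrite -mulN1r (absM Habs) absN1 mul1r.
Qed.

Lemma absX x n : abs (x ^+ n) = abs x ^+ n.
Proof. by elim: n => [|n IHn]; rewrite ?expr0 ?abs1 // !exprS (absM Habs) IHn. Qed.

Lemma abs_add_dominant x y : abs x < abs y -> abs (x + y) = abs y.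
Proof.
move=> lt_xy; apply/eqP; rewrite eq_le.
have -> /= : abs (x + y) <= abs y.
  by apply: le_trans (abs_ultra Habs x y) _; rewrite ge_max (ltW lt_xy) lexx.
have := abs_ultra Habs (x + y) (- x); rewrite addrC addKr absN.
by rewrite le_max [abs y <= abs x]leNgt lt_xy orbF.
Qed.

Lemma abs_sum_lt (I : eqType) (s : seq I) (F : I -> K) e :
  0 < e -> {in s, forall i, abs (F i) < e} -> abs (\sum_(i <- s) F i) < e.
Proof.
move=> e_gt0 F_lt; rewrite big_seq.
apply: (big_ind (fun x => abs x < e)) => [|x y x_lt y_lt|i /F_lt //].
  by rewrite abs0.
by apply: le_lt_trans (abs_ultra Habs x y) _; rewrite gt_max x_lt.
Qed.

Lemma abs_sum_le (I : eqType) (s : seq I) (F : I -> K) e :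
  0 <= e -> {in s, forall i, abs (F i) <= e} -> abs (\sum_(i <- s) F i) <= e.
Proof.
move=> e_ge0 F_le; rewrite big_seq.
apply: (big_ind (fun x => abs x <= e)) => [|x y x_le y_le|i /F_le //].
  by rewrite abs0.
by apply: le_trans (abs_ultra Habs x y) _; rewrite ge_max x_le.
Qed.

End NonarchAbs.

Section PhantomVector.
Variables (K : fieldType) (R : realType) (abs : K -> R) (p : nat) (lam : nat -> K).
Hypotheses (Habs : nonarch_abs abs) (Hp : prime p) (Hres : abs p%:R < 1).
Hypothesis Hlam : forall i, in_OK abs (lam i).

Definition phantom_term m i : K := p%:R ^+ i * lam i ^+ (p ^ (m - i)).

Lemma phantom_vectorE m :
  phantom_vector K p lam m = \sum_(0 <= i < m.+1) phantom_term m i.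
Proof. by rewrite big_mkord. Qed.

Lemma phantom_vector_split j m : (j <= m)%N ->
  phantom_vector K p lam m = phantom_term m j +
    (\sum_(0 <= i < j) phantom_term m i + \sum_(j.+1 <= i < m.+1) phantom_term m i).
Proof.
move=> le_jm; rewrite phantom_vectorE (@big_cat_nat _ _ _ j) ?(leqW le_jm) //=.
by rewrite [\sum_(j <= i < m.+1) _]big_ltn ?ltnS // addrCA.
Qed.

Lemma abs_phantom_term m i :
  abs (phantom_term m i) = abs p%:R ^+ i * abs (lam i) ^+ (p ^ (m - i)).
Proof. by rewrite (absM Habs) !(absX Habs). Qed.

Lemma abs_phantom_term_le_p m i : abs (phantom_term m i) <= abs p%:R ^+ i.
Proof.
rewrite abs_phantom_term ler_piMr ?exprn_ge0 ?(abs_ge0 Habs) //.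
by rewrite exprn_ile1 ?(abs_ge0 Habs) ?Hlam.
Qed.

Lemma abs_phantom_term_le_lam m i :
  abs (phantom_term m i) <= abs (lam i) ^+ (p ^ (m - i)).
Proof.
rewrite abs_phantom_term ler_piMl ?exprn_ge0 ?(abs_ge0 Habs) //.
by rewrite exprn_ile1 ?(abs_ge0 Habs) ?ltW.
Qed.

Lemma abs_phantom_tail_le k m n :
  abs (\sum_(k <= i < n) phantom_term m i) <= abs p%:R ^+ k.
Proof.
apply: (abs_sum_le Habs); first by rewrite exprn_ge0 ?(abs_ge0 Habs).
move=> i; rewrite mem_index_iota => /andP[le_ki _].
apply: le_trans (abs_phantom_term_le_p m i) _.
by rewrite ler_wiXn2l ?(abs_ge0 Habs) ?ltW.
Qed.

Lemma abs_phantom_head_lt_eventually k :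
  (forall i, (i < k)%N -> abs (lam i) < 1) -> forall e, 0 < e ->
  exists M, forall m, (M <= m)%N -> abs (\sum_(0 <= i < k) phantom_term m i) < e.
Proof.
elim: k => [|k IHk] lam_lt1 e e_gt0.
  by exists 0%N => m _; rewrite big_geq // abs0.
have [M head_lt] := IHk (fun i lt_ik => lam_lt1 i (ltnW lt_ik)) e e_gt0.
have [N pow_lt] := expr_lt_eventually (abs_ge0 Habs (lam k)) (lam_lt1 k (ltnSn k)) e_gt0.
exists (maxn M (k + N)) => m; rewrite geq_max => /andP[le_Mm le_kNm].
rewrite big_nat_recr //=; apply: le_lt_trans (abs_ultra Habs _ _) _.
rewrite gt_max head_lt //=; apply: le_lt_trans (abs_phantom_term_le_lam m k) _.
apply: pow_lt; apply: leq_trans (ltnW (ltn_expl _ (prime_gt1 Hp))).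
by rewrite leq_subRL // (leq_trans (leq_addr _ _) le_kNm).
Qed.

Lemma abs_phantom_vector_first_unit j : 0 < abs p%:R ->
  (forall i, (i < j)%N -> abs (lam i) < 1) -> abs (lam j) = 1 ->
  exists M, forall m, (M <= m)%N -> abs (phantom_vector K p lam m) = abs p%:R ^+ j.
Proof.
move=> absp_gt0 lam_lt1 lam_j1.
have [M head_lt] := abs_phantom_head_lt_eventually lam_lt1 (exprn_gt0 j absp_gt0).
exists (maxn M j) => m; rewrite geq_max => /andP[le_Mm le_jm].
have term_j : abs (phantom_term m j) = abs p%:R ^+ j.
  by rewrite abs_phantom_term lam_j1 expr1n mulr1.
rewrite (phantom_vector_split le_jm) addrC (abs_add_dominant Habs) term_j //.
apply: le_lt_trans (abs_ultra Habs _ _) _; rewrite gt_max head_lt //=.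
apply: le_lt_trans (abs_phantom_tail_le _ _ _) _.
by rewrite exprSr gtr_pMr ?exprn_gt0.
Qed.

Lemma phantom_vector_cvg0 :
  (forall j, abs (lam j) < 1) -> abs_cvg abs (phantom_vector K p lam) 0.
Proof.
move=> lam_lt1 e e_gt0.
have [k pk_lt] := expr_lt_eventually (abs_ge0 Habs p%:R) Hres e_gt0.
have [M head_lt] := abs_phantom_head_lt_eventually (k := k) (fun i _ => lam_lt1 i) e_gt0.
exists (maxn M k) => m; rewrite geq_max => /andP[le_Mm le_km].
rewrite subr0 phantom_vectorE (@big_cat_nat _ _ _ k) ?(leqW le_km) //=.
apply: le_lt_trans (abs_ultra Habs _ _) _; rewrite gt_max head_lt //=.
exact: le_lt_trans (abs_phantom_tail_le _ _ _) (pk_lt k (leqnn k)).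
Qed.

Lemma phantom_vector_cvg0_lam_lt1 : 0 < abs p%:R ->
  abs_cvg abs (phantom_vector K p lam) 0 -> forall j, abs (lam j) < 1.
Proof.
move=> absp_gt0 phi_cvg; elim/ltn_ind => j lam_lt1.
rewrite lt_neqAle Hlam andbT; apply/eqP => lam_j1.
have [M phi_eq] := abs_phantom_vector_first_unit absp_gt0 lam_lt1 lam_j1.
have [N phi_lt] := phi_cvg _ (exprn_gt0 j absp_gt0).
have := phi_lt (maxn M N) (leq_maxr _ _).
by rewrite subr0 phi_eq ?leq_maxl // ltxx.
Qed.

End PhantomVector.

Theorem lemma2p2p4 (K : fieldType) (R : realType) (abs : K -> R) (p : nat)
  (Habs : nonarch_abs abs) (Hcomplete : abs_complete abs)
  (Hchar0 : forall n : nat, (0 < n)%N -> n%:R != 0 :> K)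
  (Hp : prime p) (Hres : abs (p%:R) < 1)
  (lam : nat -> K) (Hlam : forall i, in_OK abs (lam i)) :
  abs_cvg abs (@phantom_vector K p lam) 0 <-> (forall j, abs (lam j) < 1).
Proof.
have absp_gt0 : 0 < abs (p%:R : K).
  by rewrite lt_def (abs_eq0 Habs) Hchar0 ?prime_gt0 ?(abs_ge0 Habs).
split.
- exact: phantom_vector_cvg0_lam_lt1.
- exact: phantom_vector_cvg0.
Qed.
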